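(* Let $F$ be a field, $V$ a nonzero vector space over $F$, $\Gamma$ a nonempty set and $\varphi:\Gamma\to\Gamma$ a map. Let $\sigma_\varphi:V^\Gamma\to V^\Gamma$, $(x_\alpha)_{\alpha\in\Gamma}\mapsto(x_{\varphi(\alpha)})_{\alpha\in\Gamma}$. Then \[{\rm Eigen}(\sigma_\varphi,V^\Gamma)=\begin{cases} \{r\in F\setminus\{0\}: \exists\theta\in P(\varphi)\ \ o(r)\mid per(\theta)\}, & W(\varphi)=\varnothing,\ \Gamma=\varphi(\Gamma),\\ \{r\in F\setminus\{0\}: \exists\theta\in P(\varphi)\ \ o(r)\mid per(\theta)\}\cup\{0\}, & W(\varphi)=\varnothing,\ \Gamma\neq\varphi(\Gamma),\\ F\setminus\{0\}, & W(\varphi)\neq\varnothing,\ \Gamma=\varphi(\Gamma),\\ F, & W(\varphi)\neq\varnothing,\ \Gamma\neq\varphi(\Gamma), \end{cases}\] where for $r\in F\setminus\{0\}$, $o(r)$ is the order of $r$ in the multiplicative group $F\setminus\{0\}$ (the condition $o(r)\mid per(\theta)$ meaning $r$ has finite order dividing $per(\theta)$).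
   Context: For a linear map $T:W\to W$ on an $F$-vector space $W$, ${\rm Eigen}(T,W)$ is the set of all $r\in F$ such that $T(x)=rx$ for some nonzero $x\in W$. A point $a\in\Gamma$ is wandering if the sequence $(\varphi^n(a))_{n\geq1}$ is one-to-one; $W(\varphi)$ is the set of wandering points. $a$ is periodic if $\varphi^n(a)=a$ for some $n\geq1$; $P(\varphi)$ is the set of periodic points, and for $\alpha\in P(\varphi)$, $per(\alpha)=\min\{n\geq1:\varphi^n(\alpha)=\alpha\}$. *)

From HB Require Import structures.
From mathcomp Require Import all_boot all_order all_algebra.
Set Implicit Arguments. Unset Strict Implicit. Unset Printing Implicit Defensive.
Import GRing.Theory.
Local Open Scope ring_scope.

Definition Eigen (F : fieldType) (V : lmodType F) (G : Type)
  (T : (G -> V) -> (G -> V)) (r : F) : Prop :=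
  exists x : G -> V, x <> (fun _ => 0) /\ T x = (fun a => r *: x a).

Definition sigma (V : Type) (G : Type) (phi : G -> G) (x : G -> V) : G -> V :=
  fun a => x (phi a).

Definition wandering (G : Type) (phi : G -> G) (a : G) : Prop :=
  forall m n : nat, (1 <= m)%N -> (1 <= n)%N ->
    iter m phi a = iter n phi a -> m = n.

Definition periodic (G : Type) (phi : G -> G) (a : G) : Prop :=
  exists n : nat, (1 <= n)%N /\ iter n phi a = a.

Definition is_per (G : Type) (phi : G -> G) (a : G) (p : nat) : Prop :=
  (1 <= p)%N /\ iter p phi a = a /\
  forall n : nat, (1 <= n)%N -> iter n phi a = a -> (p <= n)%N.

Definition is_order (F : fieldType) (r : F) (k : nat) : Prop :=
  (1 <= k)%N /\ r ^+ k = 1 /\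
  forall j : nat, (1 <= j)%N -> r ^+ j = 1 -> (k <= j)%N.

Definition per_cond (F : fieldType) (G : Type) (phi : G -> G) (r : F) : Prop :=
  r != 0 /\ exists theta : G, periodic phi theta /\
    exists k p : nat, is_order r k /\ is_per phi theta p /\ (k %| p)%N.

Definition no_wandering (G : Type) (phi : G -> G) : Prop :=
  forall a : G, ~ wandering phi a.

Definition onto (G : Type) (phi : G -> G) : Prop :=
  forall b : G, exists a : G, phi a = b.

From HB Require Import structures.
From mathcomp Require Import all_boot all_order all_algebra.
From Stdlib Require Import Classical ClassicalEpsilon FunctionalExtensionality Wf_nat.
Import GRing.Theory.
Local Open Scope ring_scope.

(* An eigenvector x of sigma_phi for the eigenvalue r satisfies
   x(phi^n b) = r^n x(b).  For r = 0 eigenvectors exist exactly when phi is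
   not onto (take the indicator of a point outside phi(Gamma)).  For r <> 0 a
   nonzero value x(b) forces b to be non-wandering, so theta := phi^m b is
   periodic and x(theta) = r^per(theta) x(theta) gives r^per(theta) = 1.
   Conversely, if r^i depends only on phi^i theta for some point theta
   (theta periodic with o(r) | per(theta), or theta = phi(a) with a
   wandering), then x(b) := r^(j-n) v whenever phi^n b = phi^j theta, and
   x(b) := 0 off the grand orbit of theta, is an eigenvector. *)

Lemma ex_minn_Prop (Q : nat -> Prop) :
  (exists n, Q n) -> exists m, Q m /\ forall n, Q n -> (m <= n)%N.
Proof.
move=> exQ.
have [m [[Qm minm] _]] :=
  dec_inh_nat_subset_has_unique_least_element Q (fun n => classic (Q n)) exQ.
by exists m; split=> // n /minm /leP.
Qed.

Section Iterates.

Context {G : Type} {phi : G -> G}.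

Lemma iter_mul_period (th : G) (p q : nat) :
  iter p phi th = th -> iter (q * p) phi th = th.
Proof. by move=> thp; elim: q => [|q IHq] //; rewrite mulSn iterD IHq thp. Qed.

Lemma iter_mod_period (th : G) (p i : nat) :
  iter p phi th = th -> iter i phi th = iter (i %% p) phi th.
Proof.
by move=> thp; rewrite {1}(divn_eq i p) addnC iterD iter_mul_period.
Qed.

Lemma is_per_iter_eq_mod [th : G] [p i j : nat] :
  is_per phi th p -> iter i phi th = iter j phi th -> i = j %[mod p].
Proof.
move=> [p_gt0 [thp minp]].
wlog le_ij : i j / (i <= j)%N => [hwlog|].
  by case: (leqP i j) => [|/ltnW] /hwlog hij // /esym /hij.
rewrite -(subnK le_ij); move: (j - i)%N => d thid.
(* Shifting both sides by i * p - i moves the base point to phi^(i p) th = th. *)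
have thd : iter d phi th = th.
  have := congr1 (iter (i * p - i) phi) thid.
  rewrite -!iterD addnCA subnK ?leq_pmulr //.
  by rewrite iterD (iter_mul_period _ _ i thp) => /esym.
have thdp : iter (d %% p) phi th = th by rewrite -iter_mod_period.
case: (posnP (d %% p)) => [d_modp|d_modp_gt0].
  by rewrite -modnDml d_modp.
by have := minp _ d_modp_gt0 thdp; rewrite leqNgt ltn_pmod.
Qed.

Lemma periodic_is_per [th : G] : periodic phi th -> exists p, is_per phi th p.
Proof.
move=> [n [n_gt0 thn]].
have [|p [[p_gt0 thp] minp]] := ex_minn_Prop (fun n => (0 < n)%N /\ iter n phi th = th).
  by exists n.
by exists p; split=> //; split=> // m m_gt0 thm; apply: minp.
Qed.

Lemma not_wandering_iter_periodic [b : G] :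
  ~ wandering phi b -> exists m, periodic phi (iter m phi b).
Proof.
move=> not_wb; apply: NNPP => no_per; apply: not_wb => m n _ _ bmn.
have periodic_lt i j : (i < j)%N -> iter i phi b = iter j phi b -> False.
  move=> lt_ij bij; apply: no_per; exists i, (j - i)%N.
  by rewrite subn_gt0 -iterD subnK ?(ltnW lt_ij).
case: (ltngtP m n) => // [lt_mn|lt_nm]; exfalso.
  exact: periodic_lt lt_mn bmn.
exact: periodic_lt lt_nm (esym bmn).
Qed.

End Iterates.

Lemma exists_is_order_dvdn {F : fieldType} [r : F] [p : nat] :
  (0 < p)%N -> r ^+ p = 1 -> exists2 k, is_order r k & (k %| p)%N.
Proof.
move=> p_gt0 rp; have [k prim_k kp] := prim_order_exists p_gt0 rp.
exists k => //; split; first exact: prim_order_gt0 prim_k.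
split; first exact: prim_expr_order prim_k.
by move=> j j_gt0 rj; apply: dvdn_leq => //; rewrite (prim_order_dvd prim_k) rj.
Qed.

Section Eigenvectors.

Context {F : fieldType} {V : lmodType F} {G : Type} (phi : G -> G).

Lemma Eigen_sigmaP (r : F) :
  Eigen (@sigma V G phi) r <->
  exists x : G -> V, (exists b, x b != 0) /\ forall a, x (phi a) = r *: x a.
Proof.
split=> [[x [x_neq0 eig]]|[x [[b xb] eig]]]; exists x; split.
- apply: NNPP => x_eq0; apply: x_neq0; apply: functional_extensionality => b.
  by apply/eqP; apply: NNPP => xb; apply: x_eq0; exists b; apply/negP.
- by move=> a; have := congr1 (fun y => y a) eig.
- by move=> x_eq0; move: xb; rewrite x_eq0 eqxx.
- by apply: functional_extensionality => a; apply: eig.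
Qed.

Lemma eigvec_iter [r : F] [x : G -> V] :
  (forall a, x (phi a) = r *: x a) -> forall n b, x (iter n phi b) = r ^+ n *: x b.
Proof.
move=> eig; elim=> [|n IHn] b; first by rewrite expr0 scale1r.
by rewrite iterS eig IHn scalerA exprS.
Qed.

Lemma Eigen_sigma0 [v : V] : v != 0 -> Eigen (@sigma V G phi) 0 <-> ~ onto phi.
Proof.
move=> v_neq0; rewrite Eigen_sigmaP; split.
  move=> [x [[b xb] eig]] onto_phi; have [a ab] := onto_phi b.
  by move: xb; rewrite -ab eig scale0r eqxx.
move=> /not_all_ex_not [b /not_ex_all_not b_notin_image].
exists (fun c => if excluded_middle_informative (c = b) then v else 0); split.
  by exists b; case: excluded_middle_informative.
move=> a; rewrite scale0r.
by case: excluded_middle_informative => // ab; case: (b_notin_image a ab).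
Qed.

Section GrandOrbit.

Variables (th : G) (r : F) (v : V).
Hypotheses (r_neq0 : r != 0) (v_neq0 : v != 0).
Hypothesis exp_orbit : forall i j, iter i phi th = iter j phi th -> r ^+ i = r ^+ j.

Definition meets_orbit (b : G) : Prop :=
  exists nj : nat * nat, iter nj.1 phi b = iter nj.2 phi th.

Lemma orbit_ratio_wd [b : G] [n j n' j' : nat] :
  iter n phi b = iter j phi th -> iter n' phi b = iter j' phi th ->
  r ^+ j / r ^+ n = r ^+ j' / r ^+ n'.
Proof.
wlog le_nn' : n j n' j' / (n <= n')%N => [hwlog|].
  case: (leqP n n') => [le_nn'|/ltnW le_n'n] bnj bnj'.
    exact: hwlog le_nn' bnj bnj'.
  by rewrite (hwlog _ _ _ _ le_n'n bnj' bnj).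
rewrite -(subnK le_nn'); move: (n' - n)%N => d bnj bdnj'.
have rdj : r ^+ (d + j) = r ^+ j' by apply: exp_orbit; rewrite iterD -bnj -iterD.
by rewrite -rdj !exprD invfM mulrACA mulfV ?mul1r // expf_neq0.
Qed.

Definition orbit_eigvec (b : G) : V :=
  match excluded_middle_informative (meets_orbit b) with
  | left mb => let nj := proj1_sig (constructive_indefinite_description _ mb) in
               (r ^+ nj.2 / r ^+ nj.1) *: v
  | right _ => 0
  end.

Lemma orbit_eigvecE [b : G] [n j : nat] :
  iter n phi b = iter j phi th -> orbit_eigvec b = (r ^+ j / r ^+ n) *: v.
Proof.
move=> bnj; rewrite /orbit_eigvec.
case: excluded_middle_informative => [mb|]; last by case; exists (n, j).
case: constructive_indefinite_description => -[n0 j0] /= bnj0.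
by rewrite (orbit_ratio_wd bnj0 bnj).
Qed.

Lemma orbit_eigvec_out [b : G] : ~ meets_orbit b -> orbit_eigvec b = 0.
Proof. by rewrite /orbit_eigvec; case: excluded_middle_informative. Qed.

Lemma Eigen_orbit_eigvec : Eigen (@sigma V G phi) r.
Proof.
apply/Eigen_sigmaP; exists orbit_eigvec; split.
  by exists th; rewrite (@orbit_eigvecE _ 0 0) // expr0 divr1 scale1r.
move=> a; case: (classic (meets_orbit a)) => [[[n j] /= anj]|a_out].
  have anj' : iter n phi (phi a) = iter j.+1 phi th by rewrite -iterSr iterS anj.
  by rewrite (orbit_eigvecE anj) (orbit_eigvecE anj') scalerA exprS mulrA.
rewrite (orbit_eigvec_out a_out) scaler0 orbit_eigvec_out // => -[[n j] /= e].
by apply: a_out; exists (n.+1, j); rewrite iterSr.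
Qed.

End GrandOrbit.

Lemma per_cond_Eigen [r : F] [v : V] :
  v != 0 -> per_cond phi r -> Eigen (@sigma V G phi) r.
Proof.
move=> v_neq0 [r_neq0 [th [_ [k [p [[_ [rk _]] [per_p kp]]]]]]].
apply: (Eigen_orbit_eigvec th _ _ r_neq0 v_neq0).
move=> i j /(is_per_iter_eq_mod per_p) ij.
have rp : r ^+ p = 1 by case/dvdnP: kp => q ->; rewrite mulnC exprM rk expr1n.
by rewrite -(expr_mod i rp) ij expr_mod.
Qed.

Lemma wandering_Eigen [r : F] [v : V] [a : G] :
  v != 0 -> r != 0 -> wandering phi a -> Eigen (@sigma V G phi) r.
Proof.
move=> v_neq0 r_neq0 wa.
apply: (Eigen_orbit_eigvec (phi a) _ _ r_neq0 v_neq0) => i j.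
rewrite -!iterSr => e.
by have [->] := wa i.+1 j.+1 isT isT e.
Qed.

Lemma Eigen_per_cond [r : F] :
  no_wandering phi -> r != 0 -> Eigen (@sigma V G phi) r -> per_cond phi r.
Proof.
move=> no_w r_neq0 /Eigen_sigmaP [x [[b xb] eig]].
have [m per_th] := not_wandering_iter_periodic (no_w b).
set th := iter m phi b in per_th.
have [p per_p] := periodic_is_per per_th; have [p_gt0 [thp _]] := per_p.
have xth : x th != 0 by rewrite /th (eigvec_iter eig) scaler_eq0 negb_or expf_neq0.
have rp : r ^+ p = 1.
  have := eigvec_iter eig p th; rewrite thp => /eqP.
  rewrite eq_sym -subr_eq0 -{2}(scale1r (x th)) -scalerBl scaler_eq0 (negbTE xth).
  by rewrite orbF subr_eq0 => /eqP.
have [k ord_k kp] := exists_is_order_dvdn p_gt0 rp.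
by split=> //; exists th; split=> //; exists k, p.
Qed.

Lemma Eigen_sigma_neq0 [v : V] [r : F] : v != 0 -> r != 0 ->
  Eigen (@sigma V G phi) r <-> (no_wandering phi -> per_cond phi r).
Proof.
move=> v_neq0 r_neq0; split=> [eig no_w|per]; first exact: Eigen_per_cond.
case: (classic (no_wandering phi)) => [/per/(per_cond_Eigen v_neq0) //|].
by move=> /not_all_not_ex [a wa]; apply: wandering_Eigen v_neq0 r_neq0 wa.
Qed.

End Eigenvectors.

Theorem corollary2p11 (F : fieldType) (V : lmodType F) (G : Type) (g0 : G)
  (phi : G -> G) (hV : exists v : V, v != 0) :
  (no_wandering phi -> onto phi ->
     forall r : F, Eigen (@sigma V G phi) r <-> per_cond phi r) /\
  (no_wandering phi -> ~ onto phi ->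
     forall r : F, Eigen (@sigma V G phi) r <-> (per_cond phi r \/ r = 0)) /\
  (~ no_wandering phi -> onto phi ->
     forall r : F, Eigen (@sigma V G phi) r <-> r != 0) /\
  (~ no_wandering phi -> ~ onto phi ->
     forall r : F, Eigen (@sigma V G phi) r <-> True).
Proof.
have [v v_neq0] := hV.
have per_cond_neq0 (r : F) : per_cond phi r -> r != 0 by case.
split; [|split; [|split]] => [no_w|no_w|w|w] onto_phi r;
  (case: (eqVneq r 0) => [->|r_neq0];
   [apply: (iff_trans (Eigen_sigma0 phi v_neq0))
   |apply: (iff_trans (Eigen_sigma_neq0 phi v_neq0 r_neq0))]).
- by split=> [//|/per_cond_neq0/eqP].
- by split=> [/(_ no_w)|per _].
- by split=> _; [right|].
- by split=> [/(_ no_w)|[per _ //|/eqP]]; [left|rewrite (negbTE r_neq0)].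
- by split=> // /(_ onto_phi).
- by split=> // _ /w.
- by split.
- by split=> // _ /w.
Qed.
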